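(* Consider plain SGD (no momentum) with scalar learning rate $\lambda>0$ and batch size $S$ on linear regression with label noise in the limit $N\to\infty$. Let $G:=2I_D-\lambda\left(1+\frac1S\right)A$ and $\kappa:=\frac{\mathrm{Tr}[AG^{-1}]}{1-\frac\lambda S\mathrm{Tr}[AG^{-1}]}$ (with $G$ invertible and the denominator nonzero). Then the expected training loss $L_{\rm train}:=\mathbb{E}_{\mathbf{w}}[L(\mathbf{w})]$ and the expected test loss $L_{\rm test}:=\frac12\mathbb{E}_{\mathbf{w}}\mathbb{E}_x[((\mathbf{w}-\mathbf{u})^{\mathrm T}x)^2]$ are $$L_{\rm train}=\frac{\sigma^2}{2}\left(1+\frac{\lambda\kappa}{S}\right),\qquad L_{\rm test}=\frac{\lambda\sigma^2}{2S}\kappa.$$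
   Context: Data: $x_i\in\mathbb{R}^D$ i.i.d. $\mathcal N(0,A)$, $A$ symmetric positive definite; $y_i=\mathbf{u}^{\mathrm T}x_i+\epsilon_i$ with $\epsilon_i$ i.i.d., independent of the $x_i$, mean $0$, variance $\sigma^2$; $L(\mathbf{w})=\frac1{2N}\sum_i(\mathbf{w}^{\mathrm T}x_i-y_i)^2$. SGD: $\mathbf{w}_t=\mathbf{w}_{t-1}-\frac\lambda S\sum_{i\in B_t}\nabla\ell_i(\mathbf{w}_{t-1})$. $\mathbb{E}_{\mathbf{w}}$ is over the stationary distribution, which has mean $\mathbf{u}$ and covariance $\Sigma$ satisfying $\lambda(A\Sigma+\Sigma A)-\lambda^2A\Sigma A=\lambda^2C$ with $C=\frac1S(A\Sigma A+\mathrm{Tr}[A\Sigma]A+\sigma^2A)$. *)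

From HB Require Import structures.
From mathcomp Require Import all_boot all_order all_algebra.
From mathcomp Require Import all_classical all_reals all_analysis.
Set Implicit Arguments. Unset Strict Implicit. Unset Printing Implicit Defensive.
Import Order.TTheory GRing.Theory Num.Theory.
Local Open Scope ring_scope.

Definition sym_posdef (R : realType) (D : nat) (A : 'M[R]_D) : Prop :=
  A^T = A /\ forall v : 'cV[R]_D, v != 0 -> 0 < (v^T *m A *m v) 0 0.

Definition label (R : realType) (D : nat) (Tx : Type) (u : 'cV[R]_D)
  (x : 'I_D -> Tx -> R) (eps : Tx -> R) : Tx -> R :=
  fun t => \sum_(i < D) u i 0 * x i t + eps t.

(* N -> oo limit of L(v) = (1/2N) sum_i (v^T x_i - y_i)^2 : the population loss
   E_{x,eps}[ (1/2)(v^T x - y)^2 ] *)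
Definition pop_loss (R : realType) (dx : measure_display) (Tx : measurableType dx)
  (Q : probability Tx R) (D : nat) (x : 'I_D -> Tx -> R) (eps : Tx -> R)
  (u : 'cV[R]_D) (v : 'I_D -> R) : \bar R :=
  'E_Q[fun t => 2^-1 * (\sum_(i < D) v i * x i t - label u x eps t) ^+ 2].

Definition L_train (R : realType) (dw : measure_display) (Tw : measurableType dw)
  (P : probability Tw R) (dx : measure_display) (Tx : measurableType dx)
  (Q : probability Tx R) (D : nat) (w : 'I_D -> Tw -> R)
  (x : 'I_D -> Tx -> R) (eps : Tx -> R) (u : 'cV[R]_D) : \bar R :=
  (\int[P]_s pop_loss Q x eps u (fun i => w i s))%E.

Definition L_test (R : realType) (dw : measure_display) (Tw : measurableType dw)
  (P : probability Tw R) (dx : measure_display) (Tx : measurableType dx)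
  (Q : probability Tx R) (D : nat) (w : 'I_D -> Tw -> R)
  (x : 'I_D -> Tx -> R) (u : 'cV[R]_D) : \bar R :=
  (\int[P]_s 'E_Q[fun t => (2^-1 * (\sum_(i < D) (w i s - u i 0) * x i t) ^+ 2)%R])%E.

Definition noiseC (R : realType) (D : nat) (A Sigma : 'M[R]_D) (S : nat) (sigma : R)
  : 'M[R]_D :=
  (S%:R)^-1 *: (A *m Sigma *m A + \tr (A *m Sigma) *: A + sigma ^+ 2 *: A).

Definition Gmat (R : realType) (D : nat) (A : 'M[R]_D) (lambda : R) (S : nat)
  : 'M[R]_D :=
  2%:M - (lambda * (1 + (S%:R)^-1)) *: A.

Definition kappa (R : realType) (D : nat) (A : 'M[R]_D) (lambda : R) (S : nat) : R :=
  \tr (A *m invmx (Gmat A lambda S)) /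
  (1 - lambda / S%:R * \tr (A *m invmx (Gmat A lambda S))).

From HB Require Import structures.
From mathcomp Require Import all_boot all_order all_algebra.
From mathcomp Require Import all_classical all_reals all_analysis.
From mathcomp Require Import ring lra.
Set Implicit Arguments.
Unset Strict Implicit.
Unset Printing Implicit Defensive.
Import Order.TTheory GRing.Theory Num.Theory.
Local Open Scope ring_scope.

(* Only second moments enter.  For fixed weights v the residual
   v^T x - y = (v - u)^T x - eps is a linear combination of the features and
   of the uncorrelated noise, so the population loss is
   1/2 ((v - u)^T A (v - u) + sigma^2); averaging over the stationary law of w
   turns the quadratic form into Tr[A Sigma].  Divided by lambda, the
   stationarity equation reads G (Sigma A) + (A Sigma) G = 2 k A with
   k = (lambda / S) (Tr[A Sigma] + sigma^2); multiplying by G^-1 and taking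
   traces gives the scalar fixpoint equation Tr[A Sigma] = k Tr[A G^-1],
   whose solution is Tr[A Sigma] = (lambda / S) sigma^2 kappa. *)

Section second_moments.
Context d (T : measurableType d) (R : realType) (P : probability T R).

Lemma Lfun1_lin_comb (I : finType) (f : I -> T -> R) (c : I -> R) :
  (forall i, f i \in Lfun P 1) -> (fun t => \sum_i c i * f i t) \in Lfun P 1.
Proof.
move=> f1; have -> : (fun t => \sum_i c i * f i t) = \sum_i (c i \o* f i).
  by apply/funext => t; rewrite fct_sumE; apply: eq_bigr => i _; rewrite /= mulrC.
by rewrite rpred_sum // => i _; apply: Lfun_scale.
Qed.

Lemma expectation_affine_comb (I : finType) (f : I -> T -> R) (c m : I -> R) b :
  (forall i, f i \in Lfun P 1) -> (forall i, 'E_P[f i] = (m i)%:E)%E ->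
  ('E_P[fun t => (\sum_i c i * f i t + b)%R] = (\sum_i c i * m i + b)%:E)%E.
Proof.
move=> f1 Ef.
rewrite (expectationD (Lfun1_lin_comb c f1) (Lfun_cst _ _ 1)) expectation_cst.
have -> : (fun t => \sum_i c i * f i t) =
          \sum_(g <- [seq c i \o* f i | i <- index_enum I]) g.
  by apply/funext => t; rewrite big_map fct_sumE; apply: eq_bigr => i _; rewrite /= mulrC.
rewrite expectation_sum => [|_ /mapP[i _ ->]]; last exact: Lfun_scale.
rewrite big_map EFinD -sumEFin; congr (_ + _)%E; apply: eq_bigr => i _.
by rewrite expectationZl // Ef EFinM.
Qed.

Lemma expectation_quad_form (I : finType) (f : I -> T -> R) (M c : I -> I -> R) b :
  (forall i, f i \in Lfun P 2%:E) -> (forall i j, 'E_P[f i * f j] = (M i j)%:E)%E ->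
  ('E_P[fun t => (\sum_i \sum_j c i j * (f i t * f j t) + b)%R] =
   (\sum_i \sum_j c i j * M i j + b)%:E)%E.
Proof.
move=> f2 Eff; rewrite pair_bigA.
under eq_fun do rewrite pair_bigA.
apply: (@expectation_affine_comb _ (fun p => f p.1 \* f p.2) (fun p => c p.1 p.2)
                                 (fun p => M p.1 p.2)) => p.
  exact: Lfun2_mul_Lfun1.
exact: Eff.
Qed.

Lemma expectation_sqr_lin_comb (I : finType) (f : I -> T -> R) (M : I -> I -> R)
    (c : I -> R) k :
  (forall i, f i \in Lfun P 2%:E) -> (forall i j, 'E_P[f i * f j] = (M i j)%:E)%E ->
  ('E_P[fun t => (k * (\sum_i c i * f i t) ^+ 2)%R] =
   (k * \sum_i \sum_j c i * c j * M i j)%:E)%E.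
Proof.
move=> f2 Eff.
have -> : (fun t => k * (\sum_i c i * f i t) ^+ 2) =
          (fun t => \sum_i \sum_j k * (c i * c j) * (f i t * f j t) + 0).
  apply/funext => t; rewrite addr0 expr2 mulr_suml mulr_sumr.
  apply: eq_bigr => i _; rewrite !mulr_sumr; apply: eq_bigr => j _; ring.
rewrite (@expectation_quad_form _ _ M) // addr0 mulr_sumr; congr EFin.
by apply: eq_bigr => i _; rewrite mulr_sumr; apply: eq_bigr => j _; ring.
Qed.

Lemma expectation_centered_quad_form (I : finType) (w : I -> T -> R) (m : I -> R)
    (Sigma c : I -> I -> R) b :
  (forall i, w i \in Lfun P 2%:E) -> (forall i, 'E_P[w i] = (m i)%:E)%E ->
  (forall i j, covariance P (w i) (w j) = (Sigma i j)%:E) ->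
  ('E_P[fun t => (\sum_i \sum_j c i j * ((w i t - m i) * (w j t - m j)) + b)%R] =
   (\sum_i \sum_j c i j * Sigma i j + b)%:E)%E.
Proof.
move=> w2 Ew Cw.
apply: (@expectation_quad_form _ (fun i => w i \- cst (m i))) => [i | i j].
  have one_le_two : (1 <= 2%:E :> \bar R)%E by rewrite lee_fin ler1n.
  by rewrite rpredB ?w2 ?Lfun_cst.
by rewrite -Cw covariance.unlock !Ew.
Qed.

End second_moments.

Lemma pop_lossE (R : realType) (D : nat) (A : 'M[R]_D) (u : 'cV[R]_D) (sigma : R)
    (dx : measure_display) (Tx : measurableType dx) (Q : probability Tx R)
    (x : 'I_D -> Tx -> R) (eps : Tx -> R) (v : 'I_D -> R) :
  (forall i, x i \in Lfun Q 2%:E) -> eps \in Lfun Q 2%:E ->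
  (forall i j, 'E_Q[x i * x j] = (A i j)%:E)%E ->
  ('E_Q[eps ^+ 2] = (sigma ^+ 2)%:E)%E ->
  (forall i, 'E_Q[x i * eps] = 0)%E ->
  pop_loss Q x eps u v =
  (2^-1 * (\sum_i \sum_j (v i - u i 0) * (v j - u j 0) * A i j + sigma ^+ 2))%:E.
Proof.
move=> x2 eps2 Exx Eee Exe.
(* The noise is appended to the features as an extra coordinate. *)
pose y (p : 'I_D + 'I_1) := if p is inl i then x i else eps.
pose c (p : 'I_D + 'I_1) := if p is inl i then v i - u i 0 else -1.
pose M (p q : 'I_D + 'I_1) :=
  match p, q with inl i, inl j => A i j | inr _, inr _ => sigma ^+ 2 | _, _ => 0 end.
have Eyy p q : ('E_Q[y p * y q] = (M p q)%:E)%E.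
  by case: p q => [i|?] [j|?] //=; rewrite mulrC Exe.
rewrite /pop_loss.
have -> : (fun t => 2^-1 * (\sum_i v i * x i t - label u x eps t) ^+ 2) =
          (fun t => 2^-1 * (\sum_p c p * y p t) ^+ 2).
  apply/funext => t; rewrite big_sumType big_ord1 /label /= opprD addrA -sumrB.
  by congr (_ * (_ + _) ^+ 2); [apply: eq_bigr => i _; ring | ring].
rewrite (expectation_sqr_lin_comb c _ _ Eyy) => [|[]//]; congr (_ * _)%:E.
rewrite big_sumType big_ord1 /=; congr (_ + _).
  by apply: eq_bigr => i _; rewrite big_sumType big_ord1 /= mulr0 addr0.
rewrite big_sumType big_ord1 big1 ?add0r /=; first ring.
by move=> i _; rewrite mulr0.
Qed.

Lemma mxtrace_sylvester (R : comUnitRingType) n (G X Y B : 'M[R]_n) :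
  G \in unitmx -> G *m X + Y *m G = B -> \tr X + \tr Y = \tr (invmx G *m B).
Proof.
move=> Gu <-; rewrite mulmxDr mxtraceD mulmxA mulVmx // mul1mx.
by rewrite mxtrace_mulC -mulmxA mulmxV // mulmx1.
Qed.

Lemma Gmat_stationary (R : realType) D (A Sigma : 'M[R]_D) lambda sigma S :
  lambda != 0 ->
  lambda *: (A *m Sigma + Sigma *m A) - lambda ^+ 2 *: (A *m Sigma *m A)
    = lambda ^+ 2 *: noiseC A Sigma S sigma ->
  Gmat A lambda S *m (Sigma *m A) + A *m Sigma *m Gmat A lambda S =
  (2 * (lambda / S%:R * (\tr (A *m Sigma) + sigma ^+ 2))) *: A.
Proof.
move=> l0 stat; apply: (scalerI l0).
rewrite /Gmat mulmxBl mulmxBr !mul_scalar_mx !mul_mx_scalar -!scalemxAl -!scalemxAr !mulmxA.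
move/matrixP: stat; rewrite /noiseC.
move: (A *m Sigma) (Sigma *m A) (A *m Sigma *m A) (\tr (A *m Sigma)) => X Y Z T stat.
by apply/matrixP => i j; move: (stat i j); rewrite !mxE => ?; lra.
Qed.

Lemma trace_stationary (R : realType) D (A Sigma : 'M[R]_D) lambda sigma S :
  lambda != 0 ->
  lambda *: (A *m Sigma + Sigma *m A) - lambda ^+ 2 *: (A *m Sigma *m A)
    = lambda ^+ 2 *: noiseC A Sigma S sigma ->
  Gmat A lambda S \in unitmx ->
  \tr (A *m Sigma) =
  lambda / S%:R * (\tr (A *m Sigma) + sigma ^+ 2) * \tr (A *m invmx (Gmat A lambda S)).
Proof.
move=> l0 stat Gu.
have := mxtrace_sylvester Gu (Gmat_stationary l0 stat).
rewrite [\tr (Sigma *m A)]mxtrace_mulC -scalemxAr mxtraceZ [\tr (invmx _ *m A)]mxtrace_mulC.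
by move=> ?; lra.
Qed.

Lemma solve_affine_fixpoint (R : fieldType) (T a s t : R) :
  1 - a * t != 0 -> T = a * (T + s) * t -> T = a * s * (t / (1 - a * t)).
Proof. by move=> d0 eT; apply: (mulIf d0); rewrite mulrA mulfVK // mulrBr mulr1 {1}eT; ring. Qed.

Lemma integral_excess_loss (R : realType) D (A : 'M[R]_D) (u : 'cV[R]_D) (Sigma : 'M[R]_D)
    (dw : measure_display) (Tw : measurableType dw) (P : probability Tw R)
    (w : 'I_D -> Tw -> R) (k b : R) :
  (forall i, w i \in Lfun P 2%:E) ->
  (forall i, 'E_P[w i] = (u i 0)%:E)%E ->
  (forall i j, covariance P (w i) (w j) = (Sigma i j)%:E) ->
  (\int[P]_s (k * (\sum_i \sum_j (w i s - u i 0) * (w j s - u j 0) * A i j + b))%:E)%E =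
  (k * (\tr (A *m Sigma) + b))%:E.
Proof.
move=> w2 Ew Cw.
have Sigma_sym i j : Sigma i j = Sigma j i.
  by have := Cw i j; rewrite covarianceC !Cw => -[].
transitivity ('E_P[fun s => \sum_i \sum_j (k * A i j) * ((w i s - u i 0) * (w j s - u j 0))
                            + k * b]%R)%E.
  rewrite expectation.unlock; apply: eq_integral => s _; congr EFin.
  rewrite mulrDr mulr_sumr; congr (_ + _); apply: eq_bigr => i _.
  by rewrite mulr_sumr; apply: eq_bigr => j _; ring.
rewrite (expectation_centered_quad_form _ _ w2 Ew Cw) mulrDr mulr_sumr; congr (_ + _)%:E.
rewrite /mxtrace; apply: eq_bigr => i _; rewrite mxE mulr_sumr.
by apply: eq_bigr => j _; rewrite Sigma_sym mulrA.
Qed.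

Theorem theorem8 (R : realType) (D : nat) (A : 'M[R]_D) (u : 'cV[R]_D)
  (Sigma : 'M[R]_D) (lambda sigma : R) (S : nat)
  (dx : measure_display) (Tx : measurableType dx) (Q : probability Tx R)
  (x : 'I_D -> Tx -> R) (eps : Tx -> R)
  (dw : measure_display) (Tw : measurableType dw) (P : probability Tw R)
  (w : 'I_D -> Tw -> R) :
  sym_posdef A -> 0 < lambda -> (0 < S)%N ->
  (* data: x ~ (0, A) (second moments), label noise eps with mean 0,
     variance sigma^2, independent of x *)
  (forall i, x i \in Lfun Q 2%:E) -> eps \in Lfun Q 2%:E ->
  (forall i, ('E_Q[x i] = 0)%E) ->
  (forall i j, ('E_Q[x i * x j] = (A i j)%:E)%E) ->
  ('E_Q[eps] = 0)%E -> ('E_Q[eps ^+ 2] = (sigma ^+ 2)%:E)%E ->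
  (forall i, ('E_Q[x i * eps] = 0)%E) ->
  (* stationary distribution of w: mean u, covariance Sigma *)
  (forall i, w i \in Lfun P 2%:E) ->
  (forall i, ('E_P[w i] = (u i 0)%:E)%E) ->
  (forall i j, covariance P (w i) (w j) = (Sigma i j)%:E) ->
  lambda *: (A *m Sigma + Sigma *m A) - lambda ^+ 2 *: (A *m Sigma *m A)
    = lambda ^+ 2 *: noiseC A Sigma S sigma ->
  Gmat A lambda S \in unitmx ->
  1 - lambda / S%:R * \tr (A *m invmx (Gmat A lambda S)) != 0 ->
  L_train P Q w x eps u = (sigma ^+ 2 / 2 * (1 + lambda * kappa A lambda S / S%:R))%:E /\
  L_test P Q w x u = (lambda * sigma ^+ 2 / (2 * S%:R) * kappa A lambda S)%:E.
Proof.
move=> _ lambda_gt0 _ x2 eps2 _ Exx _ Eee Exe w2 Ew Cw stat Gu denom_neq0.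
have trAS : \tr (A *m Sigma) = lambda / S%:R * sigma ^+ 2 * kappa A lambda S.
  apply: solve_affine_fixpoint => //.
  exact: trace_stationary (lt0r_neq0 lambda_gt0) stat Gu.
split.
- rewrite /L_train.
  under eq_integral do rewrite (pop_lossE u _ x2 eps2 Exx Eee Exe).
  by rewrite (integral_excess_loss _ _ _ w2 Ew Cw) trAS; congr EFin; ring.
- rewrite /L_test.
  under eq_integral do rewrite (expectation_sqr_lin_comb _ _ x2 Exx) -[\sum_i _]addr0.
  by rewrite (integral_excess_loss _ _ _ w2 Ew Cw) trAS invfM; congr EFin; ring.
Qed.
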